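(* Consider online multiclass classification with an arbitrary feedback graph and let $\kappa=\tfrac12$. For each round $t$ let $\ell_t$ be the multiclass hinge loss defined below and $a(\mathbf{W}_t,\mathbf{x}_t)=\ell^{(t)}(\mathbf{W}_t,y_t^\star)$. Then Gappletron (with any $\gamma\ge0$ and any OCO algorithm) satisfies for every $t$ $$\sum_{y\in[K]}p_t'(y)\mathbb{1}[y\ne y_t]\le\max\Big\{\frac23,\frac{K-1}{K}\Big\}\ell_t(\mathbf{W}_t)+\gamma_t.$$ Furthermore, $\ell_t$ satisfies $\|\nabla\ell_t(\mathbf{W}_t)\|_2^2\le4\|\mathbf{x}_t\|_2^2\,\ell_t(\mathbf{W}_t)$.
   Context: Setting: for $t=1,\dots,T$ an oblivious adversary fixes $\mathbf{x}_t\in\mathbb{R}^d$ and $y_t\in[K]$; the learner predicts $y_t'\in[K]$. A feedback graph is a directed graph $([K],\mathcal{E})$ where every node has an incoming edge; $\mathrm{out}(y')=\{y:(y',y)\in\mathcal{E}\}$; predicting $y_t'$ reveals $(y,\mathbb{1}[y\ne y_t])$ for $y\in\mathrm{out}(y_t')$ (a node with $K-1$ outgoing edges gets the missing edge added). $\mathcal{Q}=\{y':\mathrm{out}(y')=[K]\}$; $S$ is a minimum dominating set (every $y$ lies in $\mathrm{out}(y')$ for some $y'\in S$), $\rho=|S|$. Gappletron (inputs $\mathcal{Q}$, $S$, OCO algorithm $\mathcal{A}$ over matrices $\mathbf{W}\in\mathbb{R}^{K\times d}$ with rows $\mathbf{W}^k$, $\gamma\ge0$, gap map $a$ into $[0,1]$):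 at round $t$: $y_t^\star=\arg\max_k\langle\mathbf{W}_t^k,\mathbf{x}_t\rangle$; $\gamma_t=0$ if $y_t^\star\in\mathcal{Q}$, else $\gamma_t=\min\{\tfrac12,\gamma/\sqrt{|\{s\le t:y_s^\star\notin\mathcal{Q}\}|}\}$; $a_t=a(\mathbf{W}_t,\mathbf{x}_t)$; $\zeta_t=\mathbb{1}[\gamma_t\le a_t]$; $\mathbf{p}_t'=(1-\zeta_ta_t-(1-\zeta_t)\gamma_t)\mathbf{e}_{y_t^\star}+\zeta_ta_t\frac1K\mathbf{1}+(1-\zeta_t)\frac{\gamma_t}{\rho}\mathbf{1}_S$; predict $y_t'\sim\mathbf{p}_t'$; the importance-weighted loss $v_t\ell_t$ with $v_t=\mathbb{1}[y_t\in\mathrm{out}(y_t')]/P_t(y_t\in\mathrm{out}(y_t'))$ is fed to $\mathcal{A}$, which returns $\mathbf{W}_{t+1}$. Multiclass hinge loss: $m_t(\mathbf{W},y)=\langle\mathbf{W}^y,\mathbf{x}_t\rangle-\max_{k\ne y}\langle\mathbf{W}^k,\mathbf{x}_t\rangle$, $m_t^\star=\max_k m_t(\mathbf{W}_t,k)$ (computed at the current iterate $\mathbf{W}_t$). For $y\in[K]$ define $\ell^{(t)}(\mathbf{W},y)=0$ if $y=y_t^\star$ and $m_t^\star\ge\kappa$, and $\ell^{(t)}(\mathbf{W},y)=\max\{1-m_t(\mathbf{W},y),0\}$ otherwise; $\ell_t(\mathbf{W})=\ell^{(t)}(\mathbf{W},y_t)$. The gradient $\nabla\ell_t$ is with respect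 to $\mathbf{W}$ viewed as a vector in $\mathbb{R}^{Kd}$ (a subgradient where not differentiable), with the Euclidean norm. *)

From HB Require Import structures.
From mathcomp Require Import all_boot all_order all_algebra.
Set Implicit Arguments. Unset Strict Implicit. Unset Printing Implicit Defensive.
Import Order.TTheory GRing.Theory Num.Theory.
Local Open Scope ring_scope.

Section Gappletron.
Variables (R : rcfType) (K d : nat).

Definition dotk (W : 'M[R]_(K, d)) (x : 'rV[R]_d) (k : 'I_K) : R :=
  \sum_(j < d) W k j * x 0 j.

(* max_{k <> y} <W^k, x>  (the default is only used when K = 1) *)
Definition max_other (W : 'M[R]_(K, d)) (x : 'rV[R]_d) (y : 'I_K) : R :=
  \big[Num.max/dotk W x (odflt y [pick k | k != y])]_(k | k != y) dotk W x k.

Definition margin (W : 'M[R]_(K, d)) (x : 'rV[R]_d) (y : 'I_K) : R :=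
  dotk W x y - max_other W x y.

Definition mstar (Wt : 'M[R]_(K, d)) (x : 'rV[R]_d) (y0 : 'I_K) : R :=
  \big[Num.max/margin Wt x y0]_(k : 'I_K) margin Wt x k.

(* ell^{(t)}(W, y) with kappa = 1/2; Wt is the current iterate, ystar = y_t^* *)
Definition ell_t (Wt : 'M[R]_(K, d)) (x : 'rV[R]_d) (ystar : 'I_K)
  (W : 'M[R]_(K, d)) (y : 'I_K) : R :=
  if (y == ystar) && (2^-1 <= mstar Wt x ystar) then 0
  else Num.max (1 - margin W x y) 0.

(* Feedback graph: E y' y means (y', y) is an edge.
   out'(y') = out(y') with the missing edge added when |out(y')| = K-1 *)
Definition outE (E : rel 'I_K) (y' : 'I_K) : {set 'I_K} :=
  if #|[set y | E y' y]| == K.-1 then [set: 'I_K] else [set y | E y' y].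

Definition Qset (E : rel 'I_K) : {set 'I_K} := [set y' | outE E y' == [set: 'I_K]].

Definition dominating (E : rel 'I_K) (S : {set 'I_K}) : Prop :=
  forall y : 'I_K, exists2 y', y' \in S & y \in outE E y'.

Definition min_dominating (E : rel 'I_K) (S : {set 'I_K}) : Prop :=
  dominating E S /\ forall S', dominating E S' -> (#|S| <= #|S'|)%N.

(* gamma_t; n = |{s <= t : y_s^* \notin Q}| *)
Definition gamma_t (E : rel 'I_K) (gamma : R) (n : nat) (ystar : 'I_K) : R :=
  if ystar \in Qset E then 0 else Num.min 2^-1 (gamma / Num.sqrt n%:R).

Definition p_t (S : {set 'I_K}) (gt at_ : R) (ystar y : 'I_K) : R :=
  let z := ((gt <= at_)%R : bool)%:R in
  (1 - z * at_ - (1 - z) * gt) * (y == ystar)%:R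
  + z * at_ / K%:R + (1 - z) * gt / #|S|%:R * (y \in S)%:R.

Definition sqnormM (G : 'M[R]_(K, d)) : R := \sum_(i < K) \sum_(j < d) G i j ^+ 2.
Definition sqnormV (x : 'rV[R]_d) : R := \sum_(j < d) x 0 j ^+ 2.

Definition is_subgradient (f : 'M[R]_(K, d) -> R) (W G : 'M[R]_(K, d)) : Prop :=
  forall V : 'M[R]_(K, d),
    f W + \sum_(i < K) \sum_(j < d) G i j * (V i j - W i j) <= f V.

End Gappletron.

From HB Require Import structures.
From mathcomp Require Import all_boot all_order all_algebra.
From mathcomp Require Import ring lra.
Set Implicit Arguments. Unset Strict Implicit. Unset Printing Implicit Defensive.
Import Order.TTheory GRing.Theory Num.Theory.
Local Open Scope ring_scope.

(* If y_t = y_t^⋆, a mistake comes only from the exploration mass, at most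
   (1 - 1/K) a_t + gamma_t with a_t = ell_t(W_t).  If y_t <> y_t^⋆, the hinge loss
   is at least 1 + m_t^⋆: when m_t^⋆ >= 1/2 this is at least 3/2, so (2/3) ell_t >= 1;
   otherwise a_t = 1 - m_t^⋆ > 1/2 >= gamma_t forces uniform exploration, and the
   mistake probability 1 - (1 - m_t^⋆)/K is at most (1 - 1/K)(1 + m_t^⋆).

   For the gradient bound, ell_t is either identically zero or the hinge loss, whose
   value at W_t is then at least 1/2.  A step along a subgradient G raises the hinge
   loss by at least |G|^2, so it lowers the margin of y_t by at least |G|^2; but that
   margin moves by at most <G^j - G^{y_t}, x_t> <= |G|^2/2 + |x_t|^2, whence
   |G|^2 <= 2 |x_t|^2 <= 4 |x_t|^2 ell_t(W_t). *)


Section Margins.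
Variables (R : rcfType) (K d : nat).
Hypothesis hK : (1 < K)%N.
Implicit Types (W G : 'M[R]_(K, d)) (x : 'rV[R]_d) (y k : 'I_K).

Lemma exists_neq y : exists k, k != y.
Proof.
have : (0 < #|predC1 y|)%N by rewrite cardC1 card_ord; case: K hK => [|[|]].
by case/card_gt0P => k; rewrite inE => ?; exists k.
Qed.

Lemma le_max_other W x y k : k != y -> dotk W x k <= max_other W x y.
Proof. exact: (le_bigmax_cond _ (dotk W x)). Qed.

Lemma max_other_le W x y c :
  (forall k, k != y -> dotk W x k <= c) -> max_other W x y <= c.
Proof.
move=> le_c; apply: bigmax_le => //.
case: pickP => /= [k /le_c //|none].
by have [k ky] := exists_neq y; move: (none k); rewrite ky.
Qed.

Lemma max_other_attained W x y : exists2 j, j != y & max_other W x y = dotk W x j.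
Proof.
have [j0 j0y] := exists_neq y.
have [j jy jmax] := @arg_maxP _ _ _ j0 (fun k => k != y) (dotk W x) j0y.
exists j => //; apply: le_anti; rewrite le_max_other // andbT.
exact: max_other_le.
Qed.

Lemma dotkD W G x k : dotk (W + G) x k = dotk W x k + dotk G x k.
Proof. by rewrite /dotk -big_split; apply: eq_bigr => j _; rewrite mxE mulrDl. Qed.

Lemma margin_sub_le W G x y :
  exists2 j, j != y & margin W x y - margin (W + G) x y <= dotk G x j - dotk G x y.
Proof.
rewrite /margin; have [j jy ->] := max_other_attained (W + G) x y.
by exists j => //; have := le_max_other W x jy; rewrite !dotkD; lra.
Qed.

Lemma sqnormM_ge0 G : 0 <= sqnormM G.
Proof. by apply: sumr_ge0 => i _; apply: sumr_ge0 => j _; apply: sqr_ge0. Qed.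

Lemma sqnormV_ge0 x : 0 <= sqnormV x.
Proof. by apply: sumr_ge0 => j _; apply: sqr_ge0. Qed.

Lemma dotk_sub_le_sqnorm G x j y :
  j != y -> dotk G x j - dotk G x y <= sqnormM G / 2 + sqnormV x.
Proof.
move=> jy.
have rows_le : \sum_k G j k ^+ 2 + \sum_k G y k ^+ 2 <= sqnormM G.
  rewrite /sqnormM (bigD1 j) //= (bigD1 y) /=; last by rewrite eq_sym.
  rewrite addrA lerDl.
  by apply: sumr_ge0 => i _; apply: sumr_ge0 => k _; apply: sqr_ge0.
suff : dotk G x j - dotk G x y
    <= (\sum_k G j k ^+ 2 + \sum_k G y k ^+ 2) / 2 + sqnormV x by lra.
rewrite /dotk /sqnormV -sumrB -big_split mulr_suml -big_split /=.
apply: ler_sum => k _.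
(* [(u - v) w <= (u^2 + v^2)/2 + w^2] is [(u + v)^2 / 4 + ((u - v)/2 - w)^2 >= 0] *)
have := sqr_ge0 (G j k + G y k); have := sqr_ge0 ((G j k - G y k) / 2 - x 0 k).
nra.
Qed.

Lemma subgradient_step (f : 'M[R]_(K, d) -> R) W G :
  is_subgradient f W G -> f W + sqnormM G <= f (W + G).
Proof.
move=> /(_ (W + G)); congr (_ + _ <= _).
by apply: eq_bigr => i _; apply: eq_bigr => j _; rewrite mxE addrAC subrr add0r expr2.
Qed.

Lemma hinge_subgradient_sqnormM_le W G x y :
  is_subgradient (fun V => Num.max (1 - margin V x y) 0) W G ->
  sqnormM G <= 2 * sqnormV x.
Proof.
move=> /subgradient_step /= step.
have [j jy dm] := margin_sub_le W G x y.
have := dotk_sub_le_sqnorm G x jy; have := sqnormM_ge0 G; have := sqnormV_ge0 x.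
have : 1 - margin W x y <= Num.max (1 - margin W x y) 0 by rewrite le_max lexx.
have : 0 <= Num.max (1 - margin W x y) 0 by rewrite le_max lexx orbT.
move: step; rewrite [X in _ <= X]maxEle.
by case: (leP (1 - margin (W + G) x y) 0) => _; lra.
Qed.

End Margins.

Section Sampling.
Variables (R : rcfType) (K : nat).
Implicit Types (S A : {set 'I_K}) (g a : R) (ys y : 'I_K).

Lemma sum_indicator A : \sum_y ((y \in A)%:R : R) = #|A|%:R.
Proof.
rewrite -sum1_card natr_sum [RHS]big_mkcond /=.
by apply: eq_bigr => y _; case: (y \in A).
Qed.

Lemma sum_mul_neq (u : 'I_K -> R) yt :
  \sum_y u y * (y != yt)%:R = \sum_y u y - u yt.
Proof.
rewrite [in RHS](bigD1 yt) //= addrAC subrr add0r (bigD1 yt) //= eqxx mulr0 add0r.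
by apply: eq_bigr => y ->; rewrite mulr1.
Qed.

Lemma sum_mix (c : R) (u : 'I_K -> R) ys :
  \sum_y u y = 1 -> \sum_y ((1 - c) * (y == ys)%:R + c * u y) = 1.
Proof.
move=> u1; rewrite big_split -!mulr_sumr u1 /=.
under eq_bigr do rewrite -in_set1.
by rewrite sum_indicator cards1 !mulr1 subrK.
Qed.

Lemma p_t_uniform S g a ys y :
  g <= a -> p_t S g a ys y = (1 - a) * (y == ys)%:R + a * K%:R^-1.
Proof. by rewrite /p_t /= => ->; rewrite mulr1n; ring. Qed.

Lemma p_t_dominating S g a ys y :
  a < g -> p_t S g a ys y = (1 - g) * (y == ys)%:R + g * ((y \in S)%:R / #|S|%:R).
Proof. by rewrite /p_t /= leNgt => ->; rewrite mulr0n; ring. Qed.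

Lemma sum_p_t S g a ys :
  (0 < K)%N -> (0 < #|S|)%N -> \sum_y p_t S g a ys y = 1.
Proof.
move=> K_gt0 S_gt0; case: (leP g a) => ga.
  under eq_bigr do rewrite p_t_uniform //.
  apply: sum_mix.
  by rewrite sumr_const card_ord -[_ *+ K]mulr_natr mulVf // pnatr_eq0 -lt0n.
under eq_bigr do rewrite p_t_dominating //.
apply: sum_mix; rewrite -mulr_suml sum_indicator mulfV //.
by rewrite pnatr_eq0 -lt0n.
Qed.

Lemma p_t_neq_ge0 S g a ys y : y != ys -> 0 <= a -> 0 <= g -> 0 <= p_t S g a ys y.
Proof.
move=> /negbTE yys a0 g0; case: (leP g a) => ga.
  by rewrite p_t_uniform // yys mulr0 add0r mulr_ge0 ?invr_ge0.
by rewrite p_t_dominating // yys mulr0 add0r mulr_ge0 ?divr_ge0.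
Qed.

Lemma one_sub_p_t_ystar_le S g a ys :
  (0 < K)%N -> 0 <= a -> 0 <= g -> 1 - p_t S g a ys ys <= (1 - K%:R^-1) * a + g.
Proof.
move=> K_gt0 a0 g0; have ik1 : K%:R^-1 <= 1 :> R by rewrite invf_le1 ?ler1n ?ltr0n.
case: (leP g a) => ga.
  by rewrite p_t_uniform // eqxx mulr1n mulr1; lra.
rewrite p_t_dominating // eqxx mulr1n mulr1.
have : 0 <= (ys \in S)%:R / #|S|%:R :> R by rewrite divr_ge0.
have : 0 <= (1 - K%:R^-1) * a by rewrite mulr_ge0 // subr_ge0.
nra.
Qed.

End Sampling.

Lemma gamma_t_ge0 (R : rcfType) K (E : rel 'I_K) (gamma : R) n ystar :
  0 <= gamma -> 0 <= gamma_t E gamma n ystar.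
Proof.
move=> gamma0; rewrite /gamma_t; case: ifP => // _.
by rewrite le_min invr_ge0 ler0n divr_ge0 ?sqrtr_ge0.
Qed.

Lemma gamma_t_le_half (R : rcfType) K (E : rel 'I_K) (gamma : R) n ystar :
  gamma_t E gamma n ystar <= 2^-1.
Proof. by rewrite /gamma_t; case: ifP => _; rewrite ?ge_min ?lexx ?invr_ge0. Qed.

Lemma dominating_card_gt0 K (E : rel 'I_K) (S : {set 'I_K}) :
  (0 < K)%N -> dominating E S -> (0 < #|S|)%N.
Proof.
move=> K_gt0 /(_ (Ordinal K_gt0)) [y yS _].
by apply/card_gt0P; exists y.
Qed.

Section CurrentIterate.
Variables (R : rcfType) (K d : nat).
Variables (Wt : 'M[R]_(K, d)) (xt : 'rV[R]_d) (ystar : 'I_K).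
Hypothesis hystar : forall k, dotk Wt xt k <= dotk Wt xt ystar.
Local Notation m := (margin Wt xt ystar).

Lemma margin_ystar_ge0 : 0 <= m.
Proof. by rewrite /margin subr_ge0; apply: bigmax_le => [|k _]; apply: hystar. Qed.

Lemma margin_neq_ystar k : k != ystar -> margin Wt xt k <= - m.
Proof.
move=> kys; have := le_max_other Wt xt kys.
have := le_max_other Wt xt (y := k) (k := ystar); rewrite eq_sym => /(_ kys).
by have := hystar k; rewrite /margin; lra.
Qed.

Lemma mstar_ystar : mstar Wt xt ystar = m.
Proof.
apply: le_anti; rewrite (le_bigmax _ _ ystar) andbT.
apply: bigmax_le => // k _; have [-> //|kys] := eqVneq k ystar.
by have := margin_neq_ystar kys; have := margin_ystar_ge0; lra.
Qed.

Lemma ell_t_ge0 W y : 0 <= ell_t Wt xt ystar W y.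
Proof. by rewrite /ell_t; case: ifP => _; rewrite ?le_max ?lexx ?orbT. Qed.

Lemma ell_t_ystar : ell_t Wt xt ystar Wt ystar = if 2^-1 <= m then 0 else 1 - m.
Proof.
rewrite /ell_t eqxx mstar_ystar /=; case: ifP => // /negbT; rewrite -ltNge => m_half.
by rewrite max_l //; lra.
Qed.

Lemma ell_t_neq_ystar y : y != ystar -> 1 + m <= ell_t Wt xt ystar Wt y.
Proof.
move=> yys; rewrite /ell_t (negbTE yys) /= le_max.
by have := margin_neq_ystar yys; have := margin_ystar_ge0; lra.
Qed.

Lemma margin_le_half y :
  ~~ ((y == ystar) && (2^-1 <= mstar Wt xt ystar)) -> margin Wt xt y <= 2^-1.
Proof.
have [-> /=|yys _] := eqVneq y ystar; first by rewrite mstar_ystar -ltNge => /ltW.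
by have := margin_neq_ystar yys; have := margin_ystar_ge0; lra.
Qed.

End CurrentIterate.

Lemma expected_mistakes_le (R : rcfType) K d (S : {set 'I_K}) (g : R)
    (Wt : 'M[R]_(K, d)) (xt : 'rV[R]_d) (yt ystar : 'I_K) :
  (1 < K)%N -> (0 < #|S|)%N -> 0 <= g -> g <= 2^-1 ->
  (forall k, dotk Wt xt k <= dotk Wt xt ystar) ->
  \sum_y p_t S g (ell_t Wt xt ystar Wt ystar) ystar y * (y != yt)%:R
    <= Num.max (2 / 3) ((K%:R - 1) / K%:R) * ell_t Wt xt ystar Wt yt + g.
Proof.
move=> K_gt1 S_gt0 g0 g_half hystar; set a := ell_t _ _ _ _ ystar.
have K_gt0 : (0 < K)%N := ltnW K_gt1.
rewrite sum_mul_neq sum_p_t //.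
have ik_half : K%:R^-1 <= 2^-1 :> R by rewrite lef_pV2 ?posrE ?ltr0n ?ler_nat.
have -> : (K%:R - 1) / K%:R = 1 - K%:R^-1 :> R.
  by rewrite mulrBl divff ?mul1r // pnatr_eq0 -lt0n.
set M := Num.max _ _.
have M_ge_unif : 1 - K%:R^-1 <= M by rewrite le_max lexx orbT.
have M_ge_two_thirds : 2 / 3 <= M by rewrite le_max lexx.
have m0 := margin_ystar_ge0 hystar.
have a0 : 0 <= a := ell_t_ge0 _ _ _ _ _.
have l0 : 0 <= ell_t Wt xt ystar Wt yt := ell_t_ge0 _ _ _ _ _.
have [-> | ytys] := eqVneq yt ystar.
  rewrite -/a; have := one_sub_p_t_ystar_le S ystar K_gt0 a0 g0.
  by have := ler_wpM2r a0 M_ge_unif; lra.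
have l_ge := ell_t_neq_ystar hystar ytys.
have [m_half | m_half] := lerP 2^-1 (margin Wt xt ystar).
  have := p_t_neq_ge0 S ytys a0 g0.
  by have := ler_wpM2r l0 M_ge_two_thirds; lra.
have a_def : a = 1 - margin Wt xt ystar by rewrite /a ell_t_ystar // leNgt m_half.
rewrite p_t_uniform ?(negbTE ytys) ?mulr0 ?add0r; last by lra.
have := ler_wpM2r l0 M_ge_unif; rewrite a_def.
(* [1 - (1 - m)/K <= (1 - 1/K)(1 + m)] amounts to [m/K <= m/2] *)
have : 0 <= margin Wt xt ystar * (2^-1 - K%:R^-1).
  by apply: mulr_ge0; rewrite // subr_ge0.
have : 0 <= (1 - K%:R^-1) * (ell_t Wt xt ystar Wt yt - (1 + margin Wt xt ystar)).
  by apply: mulr_ge0; rewrite subr_ge0 //; lra.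
lra.
Qed.

Theorem lemma3 (R : rcfType) (K d : nat) (hK : (1 < K)%N)
  (E : rel 'I_K) (hE : forall y : 'I_K, exists y', E y' y)
  (S : {set 'I_K}) (hS : min_dominating E S)
  (gamma : R) (hgamma : 0 <= gamma) (n : nat)
  (Wt : 'M[R]_(K, d)) (xt : 'rV[R]_d) (yt ystar : 'I_K)
  (hystar : forall k, dotk Wt xt k <= dotk Wt xt ystar)
  (hn : ystar \notin Qset E -> (0 < n)%N) :
  let gt := gamma_t E gamma n ystar in
  let at_ := ell_t Wt xt ystar Wt ystar in
  let lt := ell_t Wt xt ystar ^~ yt in
  \sum_(y : 'I_K) p_t S gt at_ ystar y * (y != yt)%:R
    <= Num.max (2 / 3) ((K%:R - 1) / K%:R) * lt Wt + gt
  /\ forall G : 'M[R]_(K, d), is_subgradient lt Wt G ->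
       sqnormM G <= 4 * sqnormV xt * lt Wt.
Proof.
move=> gt at_ lt; split.
  have S_gt0 := dominating_card_gt0 (ltnW hK) hS.1.
  by apply: expected_mistakes_le => //; [exact: gamma_t_ge0 | exact: gamma_t_le_half].
move=> G; rewrite /lt /ell_t; case: ifP => [_ /subgradient_step | inactive hG].
  by rewrite add0r mulr0.
have := hinge_subgradient_sqnormM_le hK hG.
have : 2^-1 <= Num.max (1 - margin Wt xt yt) 0.
  by rewrite le_max; have := margin_le_half hystar (negbT inactive); lra.
by have := sqnormV_ge0 xt; nra.
Qed.
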